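(* Let $\Delta\ge2$ be an integer and for $\alpha\in(0,1)$ set $f_\alpha(r,s)=\dfrac{2r^\alpha}{r^\alpha+(\Delta-1)s^\alpha}$ for $r,s>0$. There exists $\varepsilon_0>0$ such that for every $\varepsilon\in(0,\varepsilon_0)$, with $\alpha=1/2+\varepsilon$, and all $0<a<2/\Delta<b<2$, we have $f_\alpha(a,b)>a$ or $f_\alpha(b,a)<b$. *)

From Stdlib Require Import Reals.
Open Scope R_scope.

Definition f_alpha (Delta : nat) (alpha r s : R) : R :=
  2 * Rpower r alpha / (Rpower r alpha + (INR Delta - 1) * Rpower s alpha).

(** Put [n = Delta - 1], [A = a^alpha], [B = b^alpha]. If both inequalities
    fail, clearing denominators gives [(b - a) A B <= n (a B^2 - b A^2)].
    Writing [a = exp (m - h)], [b = exp (m + h)] with [h > 0], both sides share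
    the factor [2 exp ((1 + 2 alpha) m)], and what remains is
    [sinh h <= n sinh ((2 alpha - 1) h)].  This is impossible once
    [n (2 alpha - 1) < 1], because [sinh] is increasing and superadditive on
    [[0, oo)]: [n sinh ((2 alpha - 1) h) < n sinh (h / n) <= sinh h]. *)

From Stdlib Require Import Reals Lra Lia.
Open Scope R_scope.

Lemma sinh_plus (x y : R) : sinh (x + y) = sinh x * cosh y + cosh x * sinh y.
Proof.
  unfold sinh, cosh.
  rewrite Ropp_plus_distr, !exp_plus.
  field.
Qed.

Lemma cosh_ge_1 (x : R) : 1 <= cosh x.
Proof.
  unfold cosh; rewrite exp_Ropp.
  assert (Hx : 0 < exp x) by apply exp_pos.
  assert (Hinv : exp x * / exp x = 1) by (field; lra).
  assert (0 < / exp x) by (apply Rinv_0_lt_compat; lra).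
  assert (0 <= (exp x - 1) ^ 2 * / exp x) by (apply Rmult_le_pos; [apply pow2_ge_0 | lra]).
  nra.
Qed.

Lemma sinh_nonneg (x : R) : 0 <= x -> 0 <= sinh x.
Proof.
  intros [Hx | <-]; rewrite <- sinh_0 at 1; [left; now apply sinh_lt | lra].
Qed.

Lemma sinh_superadditive (x y : R) :
  0 <= x -> 0 <= y -> sinh x + sinh y <= sinh (x + y).
Proof.
  intros Hx Hy.
  rewrite sinh_plus.
  pose proof (cosh_ge_1 x); pose proof (cosh_ge_1 y).
  pose proof (sinh_nonneg x Hx); pose proof (sinh_nonneg y Hy).
  nra.
Qed.

Lemma sinh_mult_nat (n : nat) (t : R) :
  0 <= t -> INR n * sinh t <= sinh (INR n * t).
Proof.
  intros Ht.
  induction n as [|n IH].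
  - simpl; rewrite !Rmult_0_l, sinh_0; lra.
  - rewrite S_INR, !Rmult_plus_distr_r, !Rmult_1_l.
    assert (0 <= INR n * t) by (apply Rmult_le_pos; [apply pos_INR | lra]).
    pose proof (sinh_superadditive (INR n * t) t ltac:(lra) Ht).
    lra.
Qed.

Lemma sinh_scaled_lt (n : nat) (c h : R) :
  (0 < n)%nat -> 0 < h -> INR n * c < 1 -> INR n * sinh (c * h) < sinh h.
Proof.
  intros Hn Hh Hnc.
  assert (HnR : 0 < INR n) by (apply lt_0_INR; lia).
  assert (Hch : c * h < h / INR n).
  { apply (Rmult_lt_reg_l (INR n)); [lra |].
    replace (INR n * (h / INR n)) with h by (field; lra).
    nra. }
  apply (Rlt_le_trans _ (INR n * sinh (h / INR n))).
  - apply Rmult_lt_compat_l; [lra | now apply sinh_lt].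
  - replace h with (INR n * (h / INR n)) at 2 by (field; lra).
    apply sinh_mult_nat.
    apply Rlt_le, Rdiv_lt_0_compat; lra.
Qed.

Lemma exp_add_minus_exp_sub (u v : R) :
  exp (u + v) - exp (u - v) = 2 * exp u * sinh v.
Proof.
  unfold sinh, Rminus.
  rewrite !exp_plus.
  field.
Qed.

Lemma Rpower_gap (n : nat) (alpha a b : R) :
  (0 < n)%nat -> INR n * (2 * alpha - 1) < 1 -> 0 < a -> a < b ->
  INR n * (a * Rpower b alpha ^ 2 - b * Rpower a alpha ^ 2) <
  (b - a) * (Rpower a alpha * Rpower b alpha).
Proof.
  intros Hn Hnc Ha Hab.
  set (m := (ln a + ln b) / 2); set (h := (ln b - ln a) / 2).
  assert (Hh : 0 < h) by (assert (ln a < ln b) by (apply ln_increasing; lra); unfold h; lra).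
  assert (Ea : a = exp (m - h)) by (unfold m, h; rewrite <- (exp_ln a) at 1 by lra; f_equal; field).
  assert (Eb : b = exp (m + h)) by (unfold m, h; rewrite <- (exp_ln b) at 1 by lra; f_equal; field).
  unfold Rpower; rewrite Ea, Eb, !ln_exp.
  set (K := 2 * exp ((1 + 2 * alpha) * m)).
  assert (HK : 0 < K) by (unfold K; pose proof (exp_pos ((1 + 2 * alpha) * m)); lra).
  assert (Eright : (exp (m + h) - exp (m - h)) *
                   (exp (alpha * (m - h)) * exp (alpha * (m + h))) = K * sinh h).
  { rewrite exp_add_minus_exp_sub, <- exp_plus; unfold K.
    replace (exp ((1 + 2 * alpha) * m))
      with (exp m * exp (alpha * (m - h) + alpha * (m + h)))
      by (rewrite <- exp_plus; f_equal; ring).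
    ring. }
  assert (Eleft : exp (m - h) * exp (alpha * (m + h)) ^ 2 -
                  exp (m + h) * exp (alpha * (m - h)) ^ 2 = K * sinh ((2 * alpha - 1) * h)).
  { simpl; rewrite !Rmult_1_r, <- !exp_plus.
    replace (m - h + (alpha * (m + h) + alpha * (m + h)))
      with ((1 + 2 * alpha) * m + (2 * alpha - 1) * h) by ring.
    replace (m + h + (alpha * (m - h) + alpha * (m - h)))
      with ((1 + 2 * alpha) * m - (2 * alpha - 1) * h) by ring.
    rewrite exp_add_minus_exp_sub; unfold K; ring. }
  rewrite Eright, Eleft.
  pose proof (sinh_scaled_lt n (2 * alpha - 1) h Hn Hh Hnc).
  nra.
Qed.

Lemma f_alpha_failures_gap (Delta : nat) (alpha a b : R) :
  (1 <= Delta)%nat -> 0 < a -> 0 < b ->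
  f_alpha Delta alpha a b <= a -> b <= f_alpha Delta alpha b a ->
  (b - a) * (Rpower a alpha * Rpower b alpha) <=
  (INR Delta - 1) * (a * Rpower b alpha ^ 2 - b * Rpower a alpha ^ 2).
Proof.
  intros HDelta Ha Hb Hfa Hfb; unfold f_alpha in Hfa, Hfb.
  set (A := Rpower a alpha) in *; set (B := Rpower b alpha) in *.
  set (d := INR Delta - 1) in *.
  assert (HA : 0 < A) by apply exp_pos.
  assert (HB : 0 < B) by apply exp_pos.
  assert (Hd : 0 <= d) by (unfold d; pose proof (le_INR 1 Delta HDelta); simpl in *; lra).
  assert (Ga : 2 * A <= a * (A + d * B)).
  { replace (2 * A) with (2 * A / (A + d * B) * (A + d * B)) by (field; nra).
    apply Rmult_le_compat_r; nra. }
  assert (Gb : b * (B + d * A) <= 2 * B).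
  { replace (2 * B) with (2 * B / (B + d * A) * (B + d * A)) by (field; nra).
    apply Rmult_le_compat_r; nra. }
  nra.
Qed.

Theorem mainTheorem9 (Delta : nat) (HDelta : (2 <= Delta)%nat) :
  exists eps0 : R, 0 < eps0 /\
    forall eps : R, 0 < eps < eps0 ->
      forall a b : R, 0 < a -> a < 2 / INR Delta -> 2 / INR Delta < b -> b < 2 ->
        f_alpha Delta (1/2 + eps) a b > a \/ f_alpha Delta (1/2 + eps) b a < b.
Proof.
  set (n := (Delta - 1)%nat).
  assert (Hn : (0 < n)%nat) by (unfold n; lia).
  assert (HnR : 0 < INR n) by (apply lt_0_INR; lia).
  assert (En : INR Delta - 1 = INR n) by (unfold n; rewrite minus_INR by lia; simpl; ring).
  exists (/ (2 * INR n)); split; [apply Rinv_0_lt_compat; lra |].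
  intros eps [_ Heps0] a b Ha Ha2 Hb2 _.
  assert (Hsmall : INR n * (2 * (1/2 + eps) - 1) < 1).
  { assert (eps * (2 * INR n) < 1).
    { rewrite <- (Rinv_l (2 * INR n)) by lra. apply Rmult_lt_compat_r; lra. }
    nra. }
  destruct (Rlt_or_le a (f_alpha Delta (1/2 + eps) a b)) as [Hfa | Hfa]; [now left |].
  destruct (Rlt_or_le (f_alpha Delta (1/2 + eps) b a) b) as [Hfb | Hfb]; [now right |].
  exfalso.
  pose proof (f_alpha_failures_gap Delta (1/2 + eps) a b ltac:(lia) Ha ltac:(lra) Hfa Hfb).
  pose proof (Rpower_gap n (1/2 + eps) a b Hn Hsmall Ha ltac:(lra)).
  rewrite En in *; lra.
Qed.
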